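(* For every $n\ge1$, the set of Tamari interval-posets of size $n$ is a sublattice of the lattice of integer posets on $[n]$ under the weak order on integer relations.
   Context: An integer relation of size $n$ is a reflexive binary relation $R$ on $[n]$, with $\mathrm{Inc}(R)=\{(a,b)\in R:a<b\}$, $\mathrm{Dec}(R)=\{(b,a)\in R:a<b\}$; the weak order on integer relations is $R\le S$ iff $\mathrm{Inc}(S)\subseteq\mathrm{Inc}(R)$ and $\mathrm{Dec}(R)\subseteq\mathrm{Dec}(S)$. An integer poset is an antisymmetric transitive integer relation; the integer posets on $[n]$ form a lattice under this order. A Tamari interval-poset of size $n$ is an integer poset $\triangleleft$ on $[n]$ such that for all $a<b<c$: $a\triangleleft c\Rightarrow b\triangleleft c$ and $c\triangleleft a\Rightarrow b\triangleleft a$. *)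

(* Elements of [n] are represented by 'I_n (i.e. 0..n-1),
   which is order-isomorphic to {1,..,n}; the order used is the one on nat. *)
From mathcomp Require Import all_boot.
Set Implicit Arguments. Unset Strict Implicit. Unset Printing Implicit Defensive.

Definition int_relation (n : nat) (R : rel 'I_n) : Prop := forall a, R a a.

Definition weak_le (n : nat) (R S : rel 'I_n) : Prop :=
  (forall a b : 'I_n, (a < b)%N -> S a b -> R a b) /\
  (forall a b : 'I_n, (a < b)%N -> R b a -> S b a).

Definition int_poset (n : nat) (R : rel 'I_n) : Prop :=
  int_relation R /\
  (forall a b, R a b -> R b a -> a = b) /\
  (forall a b c, R a b -> R b c -> R a c).

Definition tamari_interval_poset (n : nat) (R : rel 'I_n) : Prop :=
  int_poset R /\
  (forall a b c : 'I_n, (a < b)%N -> (b < c)%N ->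
     (R a c -> R b c) /\ (R c a -> R b a)).

Definition is_poset_meet (n : nat) (R S M : rel 'I_n) : Prop :=
  int_poset M /\ weak_le M R /\ weak_le M S /\
  (forall P, int_poset P -> weak_le P R -> weak_le P S -> weak_le P M).

Definition is_poset_join (n : nat) (R S J : rel 'I_n) : Prop :=
  int_poset J /\ weak_le R J /\ weak_le S J /\
  (forall P, int_poset P -> weak_le R P -> weak_le S P -> weak_le J P).

From mathcomp Require Import all_boot.
From mathcomp Require Import zify.
From Stdlib Require Import FunctionalExtensionality.
Set Implicit Arguments. Unset Strict Implicit. Unset Printing Implicit Defensive.

(* For Tamari interval-posets R and S we construct their meet explicitly:
   its increasing part is the transitive closure of Inc(R) u Inc(S), and its
   decreasing part is Dec(R) n Dec(S).  Since the weak order is antisymmetric on reflexive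
   relations, every meet of R and S equals this one.
   Joins are obtained by duality: reversing [n] (i |-> n-1-i) preserves
   integer posets and Tamari interval-posets and reverses the weak order, so
   it exchanges meets and joins. *)

Lemma connect_to_ind (T : finType) (e : rel T) (y : T) (P : T -> Prop) :
  P y -> (forall x w, e x w -> connect e w y -> P w -> P x) ->
  forall x, connect e x y -> P x.
Proof.
move=> Py IH x /connectP [p]; elim: p x => [|w p IHp] x /=; first by move=> _ <-.
case/andP => exw pw ly; apply: (IH x w exw); last exact: IHp pw ly.
by apply/connectP; exists p.
Qed.

Section TamariClosure.
Variables (n : nat) (T : rel 'I_n).
Hypothesis tipT : tamari_interval_poset T.

Lemma tip_dec_closed (a b w : 'I_n) :
  T b a -> (a < w)%N -> (w <= b)%N -> T w a.
Proof.
case: tipT => _ tamari Tba aw; rewrite leq_eqVlt => /orP [/eqP/ord_inj -> //|wb].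
by have [_ decT] := tamari a w b aw wb; apply: decT.
Qed.

Lemma tip_inc_closed (a b c : 'I_n) :
  T a c -> (a <= b)%N -> (b < c)%N -> T b c.
Proof.
case: tipT => _ tamari Tac; rewrite leq_eqVlt => /orP [/eqP/ord_inj <- //|ab] bc.
by have [incT _] := tamari a b c ab bc; apply: incT.
Qed.

(* No increasing relation a -> w can jump over a decreasing one b -> a:
   otherwise w -> a would hold too, contradicting antisymmetry. *)
Lemma tip_no_crossing (a w b : 'I_n) :
  T a w -> (a < w)%N -> T b a -> (w <= b)%N -> False.
Proof.
move=> Taw aw Tba wb; have Twa := tip_dec_closed Tba aw wb.
case: tipT => [[_ [antisym _]] _].
by move: aw; rewrite (antisym _ _ Taw Twa) ltnn.
Qed.

Lemma tip_trans (a b c : 'I_n) : T a b -> T b c -> T a c.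
Proof. by case: tipT => [[_ [_ trans]] _]; apply: trans. Qed.

End TamariClosure.

Section Meet.
Variables (n : nat) (R S : rel 'I_n).
Hypotheses (tipR : tamari_interval_poset R) (tipS : tamari_interval_poset S).

Definition inc_union : rel 'I_n := fun u v => (u < v)%N && (R u v || S u v).

Definition tip_meet : rel 'I_n :=
  fun a b => if (a <= b)%N then connect inc_union a b else R a b && S a b.

Lemma inc_path_le (x y : 'I_n) : connect inc_union x y -> (x <= y)%N.
Proof.
move: x; apply: connect_to_ind => // x w /andP [xw _] _ wy; lia.
Qed.

Lemma inc_union_no_crossing (a w b : 'I_n) :
  inc_union a w -> R b a -> S b a -> (w <= b)%N -> False.
Proof.
case/andP => aw /orP [H|H] Rba Sba wb.
- exact: (tip_no_crossing tipR H aw Rba wb).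
- exact: (tip_no_crossing tipS H aw Sba wb).
Qed.

Lemma inc_path_dec_antisym (a b : 'I_n) :
  (a < b)%N -> connect inc_union a b -> R b a -> S b a -> False.
Proof.
move=> ab /connectP [[|w p]] /=; first by move=> _ e; move: ab; rewrite e ltnn.
case/andP => Eaw pw lw Rba Sba; apply: (inc_union_no_crossing Eaw Rba Sba).
by apply: inc_path_le; apply/connectP; exists p.
Qed.

Lemma inc_path_then_dec (y z : 'I_n) : (z < y)%N -> R y z -> S y z ->
  forall x, connect inc_union x y -> (x < z)%N -> connect inc_union x z.
Proof.
move=> zy Ryz Syz; apply: connect_to_ind => [yz|x w Exw cwy IH xz].
  by exfalso; lia.
have [wz|zw|/ord_inj <-] := ltngtP w z.
- exact: connect_trans (connect1 Exw) (IH wz).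
- have wy := inc_path_le cwy; apply: connect1; rewrite /inc_union xz /=.
  case/andP: Exw => _ /orP [H|H].
  + by rewrite (tip_trans tipR H (tip_dec_closed tipR Ryz zw wy)).
  + by rewrite (tip_trans tipS H (tip_dec_closed tipS Syz zw wy)) orbT.
- exact: connect1.
Qed.

Lemma dec_then_inc_path (x y z : 'I_n) : (y < x)%N -> R x y -> S x y ->
  connect inc_union y z -> (y < z)%N -> (x < z)%N /\ connect inc_union x z.
Proof.
move=> yx Rxy Sxy /connectP [[|w p]] /=.
  by move=> _ e; rewrite e ltnn.
case/andP => Eyw pw lw yz.
have cwz : connect inc_union w z by apply/connectP; exists p.
have xw : (x < w)%N.
  by rewrite ltnNge; apply/negP => /(inc_union_no_crossing Eyw Rxy Sxy).
split; first by have := inc_path_le cwz; lia.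
apply: connect_trans cwz; apply: connect1; rewrite /inc_union xw /=.
case/andP: Eyw => _ /orP [H|H].
- by rewrite (tip_trans tipR Rxy H).
- by rewrite (tip_trans tipS Sxy H) orbT.
Qed.

(* The generated increasing part satisfies the first Tamari condition: a path
   x ~> c starting at or below b < c yields a path b ~> c. *)
Lemma inc_path_suffix (b c : 'I_n) : (b < c)%N ->
  forall x, connect inc_union x c -> (x <= b)%N -> connect inc_union b c.
Proof.
move=> bc; apply: connect_to_ind => [cb|x w Exw cwc IH xb]; first by exfalso; lia.
have [wb|bw] := leqP w b; first exact: IH.
apply: connect_trans cwc; apply: connect1; rewrite /inc_union bw /=.
case/andP: Exw => _ /orP [H|H].
- by rewrite (tip_inc_closed tipR H xb bw).
- by rewrite (tip_inc_closed tipS H xb bw) orbT.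
Qed.

Lemma tip_meet_antisym (a b : 'I_n) : tip_meet a b -> tip_meet b a -> a = b.
Proof.
rewrite /tip_meet; have [ab|ba|/ord_inj //] := ltngtP a b.
- by move=> /= p /andP [r s]; case: (inc_path_dec_antisym ab p r s).
- by move=> /= /andP [r s] p; case: (inc_path_dec_antisym ba p r s).
Qed.

Lemma tip_meet_trans (a b c : 'I_n) :
  tip_meet a b -> tip_meet b c -> tip_meet a c.
Proof.
rewrite /tip_meet; case: (leqP a b) => ab; case: (leqP b c) => bc.
- by rewrite (leq_trans ab bc); apply: connect_trans.
- move=> pab /andP [Rbc Sbc]; have [ac|ca|/ord_inj <-] := ltngtP a c.
  + exact: inc_path_then_dec bc Rbc Sbc a pab ac.
  + by rewrite (tip_dec_closed tipR Rbc ca ab) (tip_dec_closed tipS Sbc ca ab).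
  + exact: connect0.
- move=> /andP [Rab Sab] pbc; have [bc'|cb|/ord_inj <-] := ltngtP b c.
  + by have [ac pac] := dec_then_inc_path ab Rab Sab pbc bc'; rewrite (ltnW ac).
  + by move: bc; rewrite leqNgt cb.
  + by rewrite leqNgt ab Rab Sab.
- move=> /andP [Rab Sab] /andP [Rbc Sbc].
  by rewrite leqNgt (ltn_trans bc ab) (tip_trans tipR Rab Rbc) (tip_trans tipS Sab Sbc).
Qed.

Lemma tip_meet_poset : int_poset tip_meet.
Proof.
split; first by move=> a; rewrite /tip_meet leqnn connect0.
by split; [exact: tip_meet_antisym | exact: tip_meet_trans].
Qed.

Lemma tip_meet_is_meet : is_poset_meet R S tip_meet.
Proof.
have below (T : rel 'I_n) : (forall u v : 'I_n, T u v -> R u v || S u v) ->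
    (forall u v : 'I_n, (v < u)%N -> R u v -> S u v -> T u v) ->
    weak_le tip_meet T.
  move=> incT decT; split => a b ab.
  - by move=> Tab; rewrite /tip_meet (ltnW ab); apply/connect1; rewrite /inc_union ab incT.
  - by rewrite /tip_meet leqNgt ab => /andP [Rba Sba]; apply: decT.
split; first exact: tip_meet_poset.
split; first by apply: below => [u v ->|u v _ ->].
split; first by apply: below => [u v ->|u v _ _ ->]; rewrite ?orbT.
move=> P [reflP [_ transP]] [incR decR] [incS decS]; split => a b ab.
- rewrite /tip_meet (ltnW ab); move: a {ab}; apply: connect_to_ind => // x w.
  by case/andP => xw /orP [H|H] _ /(transP x w b) -> //; [apply: incR | apply: incS].
- by move=> Pba; rewrite /tip_meet leqNgt ab (decR _ _ ab Pba) (decS _ _ ab Pba).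
Qed.

Lemma tip_meet_tamari : tamari_interval_poset tip_meet.
Proof.
split; first exact: tip_meet_poset.
move=> a b c ab bc; have ac := ltn_trans ab bc; split.
- rewrite /tip_meet (ltnW ac) (ltnW bc) => pac.
  exact: inc_path_suffix bc a pac (ltnW ab).
- rewrite /tip_meet leqNgt ac leqNgt ab /= => /andP [Rca Sca].
  by rewrite (tip_dec_closed tipR Rca ab (ltnW bc)) (tip_dec_closed tipS Sca ab (ltnW bc)).
Qed.

End Meet.

Lemma weak_le_antisym n (R S : rel 'I_n) :
  int_relation R -> int_relation S -> weak_le R S -> weak_le S R -> R = S.
Proof.
move=> reflR reflS [incRS decRS] [incSR decSR].
apply: functional_extensionality => a; apply: functional_extensionality => b.
have [ab|ba|/ord_inj <-] := ltngtP a b; last by rewrite reflR reflS.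
- by apply/idP/idP; [apply: incSR | apply: incRS].
- by apply/idP/idP; [apply: decRS | apply: decSR].
Qed.

Lemma poset_meet_unique n (R S M1 M2 : rel 'I_n) :
  is_poset_meet R S M1 -> is_poset_meet R S M2 -> M1 = M2.
Proof.
move=> [P1 [L1 [K1 G1]]] [P2 [L2 [K2 G2]]].
by apply: weak_le_antisym (P1.1) (P2.1) (G2 M1 P1 L1 K1) (G1 M2 P2 L2 K2).
Qed.

Definition rev_rel n (T : rel 'I_n) : rel 'I_n :=
  fun a b => T (rev_ord a) (rev_ord b).

Lemma rev_relK n (T : rel 'I_n) : rev_rel (rev_rel T) = T.
Proof.
apply: functional_extensionality => a; apply: functional_extensionality => b.
by rewrite /rev_rel !rev_ordK.
Qed.

Lemma rev_ord_lt n (a b : 'I_n) : (rev_ord a < rev_ord b)%N = (b < a)%N.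
Proof. by have := ltn_ord a; have := ltn_ord b => /= *; apply/idP/idP; lia. Qed.

Lemma rev_rel_poset n (T : rel 'I_n) : int_poset T -> int_poset (rev_rel T).
Proof.
move=> [reflT [antisymT transT]]; split; first by move=> a; apply: reflT.
split; last by move=> a b c; apply: transT.
by move=> a b Tab Tba; apply: rev_ord_inj; apply: antisymT.
Qed.

Lemma rev_rel_tamari n (T : rel 'I_n) :
  tamari_interval_poset T -> tamari_interval_poset (rev_rel T).
Proof.
move=> [posetT tamari]; split; first exact: rev_rel_poset.
move=> a b c ab bc; rewrite /rev_rel.
have [decT incT] := tamari (rev_ord c) (rev_ord b) (rev_ord a)
  (ltac:(by rewrite rev_ord_lt)) (ltac:(by rewrite rev_ord_lt)).
by split.
Qed.

Lemma rev_rel_weak_le n (T U : rel 'I_n) :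
  weak_le (rev_rel U) (rev_rel T) <-> weak_le T U.
Proof.
have flip (A B : rel 'I_n) : weak_le A B -> weak_le (rev_rel B) (rev_rel A).
  by move=> [incAB decAB]; split => a b ab; [apply: decAB | apply: incAB];
    rewrite rev_ord_lt.
by split; [move/flip; rewrite !rev_relK | apply: flip].
Qed.

Lemma rev_meet_join n (R S J : rel 'I_n) :
  is_poset_meet (rev_rel R) (rev_rel S) (rev_rel J) <-> is_poset_join R S J.
Proof.
have posetE (T : rel 'I_n) : int_poset (rev_rel T) <-> int_poset T.
  by split; [move/rev_rel_poset; rewrite rev_relK | apply: rev_rel_poset].
split=> [[PJ [RJ [SJ glb]]] | [PJ [RJ [SJ lub]]]].
- rewrite posetE in PJ; rewrite rev_rel_weak_le in RJ; rewrite rev_rel_weak_le in SJ.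
  split=> //; split=> //; split=> // P PP RP SP; rewrite -rev_rel_weak_le.
  by apply: glb; rewrite ?posetE ?rev_rel_weak_le.
- split; first by rewrite posetE.
  split; first by rewrite rev_rel_weak_le.
  split; first by rewrite rev_rel_weak_le.
  move=> P PP RP SP.
  rewrite -(rev_relK P) rev_rel_weak_le; apply: lub.
  + exact: rev_rel_poset.
  + by rewrite -rev_rel_weak_le rev_relK.
  + by rewrite -rev_rel_weak_le rev_relK.
Qed.

Theorem mainTheorem8 (n : nat) : (0 < n)%N ->
  forall R S : rel 'I_n,
    tamari_interval_poset R -> tamari_interval_poset S ->
    ((exists M, is_poset_meet R S M) /\
     (forall M, is_poset_meet R S M -> tamari_interval_poset M)) /\
    ((exists J, is_poset_join R S J) /\
     (forall J, is_poset_join R S J -> tamari_interval_poset J)).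
Proof.
move=> _ R S tipR tipS.
have meetRS := tip_meet_is_meet tipR tipS.
have meet_rev := tip_meet_is_meet (rev_rel_tamari tipR) (rev_rel_tamari tipS).
split; split.
- by exists (tip_meet R S).
- by move=> M /(poset_meet_unique meetRS) <-; apply: tip_meet_tamari.
- exists (rev_rel (tip_meet (rev_rel R) (rev_rel S))).
  by apply/rev_meet_join; rewrite rev_relK.
- move=> J /rev_meet_join /(poset_meet_unique meet_rev) revJ.
  rewrite -(rev_relK J) -revJ; apply/rev_rel_tamari/tip_meet_tamari;
    exact: rev_rel_tamari.
Qed.
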